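(* Consider the one-hidden-layer ReLU network setting below, trained by gradient descent with Polyak's momentum with step size $\eta>0$ and momentum parameter $\beta\in[0,1]$. Fix $R>0$ and $t\ge0$, and assume $\|w^{(r)}_s-w^{(r)}_0\|\le R$ for all $r\in[m]$ and all $s\in\{0,1,\dots,t+1\}$. Let $\xi_s:=u_s-y\in\mathbb{R}^n$ and define $$\iota_t:=\eta(H_0-H_t)\xi_t,\qquad \phi_t:=\xi_{t+1}-(1+\beta)\xi_t+\beta\xi_{t-1}+\eta H_t\xi_t,$$ so that $\begin{bmatrix}\xi_{t+1}\\ \xi_t\end{bmatrix}=\begin{bmatrix}(1+\beta)I_n-\eta H_0&-\beta I_n\\ I_n&0\end{bmatrix}\begin{bmatrix}\xi_t\\ \xi_{t-1}\end{bmatrix}+\begin{bmatrix}\phi_t+\iota_t\\0\end{bmatrix}$. Then for every $i\in[n]$, $$|\phi_t[i]|\le\frac{2\eta\sqrt n\,|S_i^\perp|}{m}\Big(\|u_t-y\|+\beta\sum_{s=0}^{t-1}\beta^{t-1-s}\|u_s-y\|\Big).$$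
   Context: Data $x_1,\dots,x_n\in\mathbb{R}^d$ with $\|x_i\|\le1$, labels $y\in\mathbb{R}^n$. Network $\mathcal N_W(x)=\frac{1}{\sqrt m}\sum_{r=1}^m a_r\sigma(\langle w^{(r)},x\rangle)$ with $\sigma(z)=z\mathbb{1}\{z\ge0\}$, fixed $a_r\in\{-1,1\}$, trainable $W=\{w^{(r)}\}_{r=1}^m\subset\mathbb{R}^d$. Loss $\ell(W)=\frac12\sum_i(y_i-\mathcal N_W(x_i))^2$, subgradient $\frac{\partial\ell(W)}{\partial w^{(r)}}:=\frac1{\sqrt m}\sum_{i=1}^n(\mathcal N_W(x_i)-y_i)a_r\mathbb{1}\{\langle w^{(r)},x_i\rangle\ge0\}x_i$. Gradient descent with Polyak's momentum: $w^{(r)}_{-1}:=w^{(r)}_0$, $w^{(r)}_{t+1}=w^{(r)}_t-\eta\frac{\partial\ell(W_t)}{\partial w^{(r)}_t}+\beta(w^{(r)}_t-w^{(r)}_{t-1})$. $u_t\in\mathbb{R}^n$ has entries $u_t[i]=\mathcal N_{W_t}(x_i)$. $H_t\in\mathbb{R}^{n\times n}$ has entries $(H_t)_{ij}=\frac1m\sum_{r=1}^m x_i^\top x_j\mathbb{1}\{\langle w^{(r)}_t,x_i\rangle\ge0\ \&\ \langle w^{(r)}_t,x_j\rangle\ge0\}$. For $i\in[n]$, $r\in[m]$, $A_{ir}$ is the event that there exists $w$ with $\|w-w^{(r)}_0\|\le R$ and $\mathbb{1}\{x_i^\top w^{(r)}_0\ge0\}\ne\mathbb{1}\{x_i^\top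 w\ge0\}$; $S_i:=\{r\in[m]:A_{ir}\text{ does not hold}\}$ and $S_i^\perp:=[m]\setminus S_i$. *)

From HB Require Import structures.
From mathcomp Require Import all_boot all_order all_algebra.
From mathcomp Require Import boolp reals.
Set Implicit Arguments. Unset Strict Implicit. Unset Printing Implicit Defensive.
Import Order.TTheory GRing.Theory Num.Theory.
Local Open Scope ring_scope.

Section Defs.
Variable R : realType.

Definition dotv (d : nat) (u v : 'rV[R]_d) : R := \sum_(k < d) u 0 k * v 0 k.
Definition normv (d : nat) (u : 'rV[R]_d) : R := Num.sqrt (dotv u u).

Definition normf (n : nat) (v : 'I_n -> R) : R := Num.sqrt (\sum_(i < n) v i ^+ 2).

Definition ind (z : R) : R := if 0 <= z then 1 else 0.
Definition relu (z : R) : R := z * ind z.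

Definition net (d m : nat) (a : 'I_m -> R) (W : 'I_m -> 'rV[R]_d) (x : 'rV[R]_d) : R :=
  (Num.sqrt m%:R)^-1 * \sum_(r < m) a r * relu (dotv (W r) x).

Definition grad (d n m : nat) (x : 'I_n -> 'rV[R]_d) (y : 'I_n -> R) (a : 'I_m -> R)
  (W : 'I_m -> 'rV[R]_d) (r : 'I_m) : 'rV[R]_d :=
  (Num.sqrt m%:R)^-1 *: \sum_(i < n)
     (((net a W (x i) - y i) * a r * ind (dotv (W r) (x i))) *: x i).

(* W : nat -> weights is the Polyak-momentum trajectory, with w_{-1} := w_0
   (encoded by truncated subtraction s.-1 at s = 0). *)
Definition momentum_traj (d n m : nat) (x : 'I_n -> 'rV[R]_d) (y : 'I_n -> R)
  (a : 'I_m -> R) (eta beta : R) (W : nat -> 'I_m -> 'rV[R]_d) : Prop :=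
  forall (s : nat) (r : 'I_m),
    W s.+1 r = W s r - eta *: grad x y a (W s) r + beta *: (W s r - W s.-1 r).

Definition uvec (d n m : nat) (x : 'I_n -> 'rV[R]_d) (a : 'I_m -> R)
  (W : 'I_m -> 'rV[R]_d) : 'I_n -> R := fun i => net a W (x i).

Definition Hmat (d n m : nat) (x : 'I_n -> 'rV[R]_d) (W : 'I_m -> 'rV[R]_d)
  (i j : 'I_n) : R :=
  (m%:R)^-1 * \sum_(r < m) dotv (x i) (x j) *
     (if (0 <= dotv (W r) (x i)) && (0 <= dotv (W r) (x j)) then 1 else 0).

Definition event_A (d n m : nat) (x : 'I_n -> 'rV[R]_d) (W0 : 'I_m -> 'rV[R]_d)
  (Rad : R) (i : 'I_n) (r : 'I_m) : Prop :=
  exists w : 'rV[R]_d, normv (w - W0 r) <= Rad /\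
    (0 <= dotv (x i) (W0 r)) != (0 <= dotv (x i) w).

Definition Sperp (d n m : nat) (x : 'I_n -> 'rV[R]_d) (W0 : 'I_m -> 'rV[R]_d)
  (Rad : R) (i : 'I_n) : {set 'I_m} :=
  [set r : 'I_m | `[< event_A x W0 Rad i r >] ].

End Defs.

From HB Require Import structures.
From mathcomp Require Import all_boot all_order all_algebra.
From mathcomp Require Import boolp reals.
From mathcomp Require Import ring lra zify.
Set Implicit Arguments. Unset Strict Implicit. Unset Printing Implicit Defensive.
Import Order.TTheory GRing.Theory Num.Theory.
Local Open Scope ring_scope.

(* Fix a data point x_i and write z_s(r) := <w_s^(r), x_i> for the
   pre-activation of neuron r at step s.  The proof splits the residual
   phi_t[i] into a sum over neurons of per-neuron terms T_r:
   - Polyak's recursion gives z_{s+1} - z_s = -eta <grad_r, x_i>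
     + beta (z_s - z_{s-1}); since |<grad_r, x_i>| <= sqrt(n/m) ||xi_s||,
     unrolling yields |z_k - z_{k-1}| <= eta sqrt(n/m) sum_s beta^(k-1-s)
     ||xi_s||.  As ReLU is 1-Lipschitz this bounds every T_r by
     2 eta sqrt n / m (||xi_t|| + beta sum_s beta^(t-1-s) ||xi_s||);
   - if r is not in S_i^perp, the sign of z_s(r) is the same for all
     s <= t+1, ReLU acts linearly along the trajectory, and the momentum
     part of T_r cancels exactly against its Gram-matrix part (a_r^2 = 1),
     so T_r = 0.
   Summing over r gives the bound with the factor |S_i^perp|. *)

Lemma sum_mul_sum (R : realType) (d : nat) (F G : 'I_d -> R) :
  \sum_i \sum_j F i * G j = (\sum_i F i) * (\sum_j G j).
Proof. rewrite big_distrl /=; apply: eq_bigr => i _; by rewrite big_distrr. Qed.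

Lemma cauchy_schwarz_sq (R : realType) (d : nat) (u v : 'I_d -> R) :
  (\sum_k u k * v k) ^+ 2 <= (\sum_k u k ^+ 2) * (\sum_k v k ^+ 2).
Proof.
have lagrange : \sum_i \sum_j (u i * v j - u j * v i) ^+ 2 =
   2 * ((\sum_k u k ^+ 2) * (\sum_k v k ^+ 2) - (\sum_k u k * v k) ^+ 2).
  have expand i j : (u i * v j - u j * v i) ^+ 2 =
     u i ^+ 2 * v j ^+ 2 + v i ^+ 2 * u j ^+ 2 - (2 * (u i * v i)) * (u j * v j).
    by ring.
  under eq_bigr do under eq_bigr do rewrite expand.
  under eq_bigr do rewrite sumrB big_split /=.
  rewrite sumrB big_split /= !sum_mul_sum -mulr_sumr.
  set A := \sum_k _; set B := \sum_k _; set C := \sum_k _; ring.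
have : 0 <= \sum_i \sum_j (u i * v j - u j * v i) ^+ 2.
  by apply: sumr_ge0 => i _; apply: sumr_ge0 => j _; exact: sqr_ge0.
rewrite lagrange -subr_ge0; nra.
Qed.

Lemma cauchy_schwarz (R : realType) (d : nat) (u v : 'I_d -> R) :
  `|\sum_k u k * v k| <= Num.sqrt (\sum_k u k ^+ 2) * Num.sqrt (\sum_k v k ^+ 2).
Proof.
rewrite -sqrtrM; last by apply: sumr_ge0 => k _; exact: sqr_ge0.
rewrite -sqrtr_sqr ler_sqrt; first exact: cauchy_schwarz_sq.
by apply: mulr_ge0; apply: sumr_ge0 => k _; exact: sqr_ge0.
Qed.

Section Euclid.
Context {R : realType}.
Implicit Types (d : nat).

Lemma dotvC d (u v : 'rV[R]_d) : dotv u v = dotv v u.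
Proof. by rewrite /dotv; apply: eq_bigr => k _; rewrite mulrC. Qed.

Lemma dotvBl d (u v w : 'rV[R]_d) : dotv (u - v) w = dotv u w - dotv v w.
Proof. by rewrite /dotv -sumrB; apply: eq_bigr => k _; rewrite !mxE mulrBl. Qed.

Lemma dotvDl d (u v w : 'rV[R]_d) : dotv (u + v) w = dotv u w + dotv v w.
Proof. by rewrite /dotv -big_split; apply: eq_bigr => k _; rewrite !mxE mulrDl. Qed.

Lemma dotvZl d (k : R) (u w : 'rV[R]_d) : dotv (k *: u) w = k * dotv u w.
Proof. by rewrite /dotv mulr_sumr; apply: eq_bigr => l _; rewrite !mxE mulrA. Qed.

Lemma dotv_suml d n (F : 'I_n -> 'rV[R]_d) w :
  dotv (\sum_j F j) w = \sum_j dotv (F j) w.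
Proof.
rewrite /dotv; under eq_bigr do rewrite summxE mulr_suml.
by rewrite exchange_big.
Qed.

Lemma normv_ge0 d (u : 'rV[R]_d) : 0 <= normv u.
Proof. exact: sqrtr_ge0. Qed.

Lemma dotv_unit_ball d (u v : 'rV[R]_d) :
  normv u <= 1 -> normv v <= 1 -> `|dotv u v| <= 1.
Proof.
move=> hu hv.
apply: le_trans (cauchy_schwarz (fun k => u 0 k) (fun k => v 0 k)) _.
by rewrite -[1](mulr1 1); apply: ler_pM => //; exact: normv_ge0.
Qed.

Lemma l1_le_sqrt_l2 n (v : 'I_n -> R) : \sum_j `|v j| <= Num.sqrt n%:R * normf v.
Proof.
have := cauchy_schwarz (fun _ : 'I_n => 1) (fun j => `|v j|).
under eq_bigr do rewrite mul1r.
under [X in _ <= Num.sqrt X * _]eq_bigr do rewrite expr1n.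
under [X in _ <= _ * Num.sqrt X]eq_bigr do rewrite real_normK ?num_real //.
rewrite sumr_const card_ord ger0_norm; last by apply: sumr_ge0.
by rewrite [n%:R]/(_ *+ _).
Qed.

Lemma weighted_sum_le n (w v : 'I_n -> R) :
  (forall j, `|w j| <= 1) -> `|\sum_j w j * v j| <= Num.sqrt n%:R * normf v.
Proof.
move=> hw; apply: le_trans (ler_norm_sum _ _ _) _.
apply: le_trans (l1_le_sqrt_l2 v); apply: ler_sum => j _.
by rewrite normrM ler_piMl.
Qed.

Lemma ind_le1 (p : R) : `|ind p| <= 1.
Proof. by rewrite /ind; case: ifP; rewrite ?normr1 ?normr0. Qed.

Lemma relu_lipschitz (p q : R) : `|relu p - relu q| <= `|p - q|.
Proof.
rewrite /relu /ind.
case: (lerP 0 p) => hp; case: (lerP 0 q) => hq; rewrite ?mulr1 ?mulr0.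
- by [].
- rewrite subr0 !ger0_norm //; lra.
- rewrite sub0r normrN ger0_norm // ltr0_norm; lra.
- by rewrite subr0 normr0.
Qed.

Lemma relu_same_sign (p q : R) :
  (0 <= p) = (0 <= q) -> relu p - relu q = (p - q) * ind q.
Proof. by rewrite /relu /ind => ->; case: ifP => _; ring. Qed.

End Euclid.

Definition momsum (R : realType) (beta : R) (B : nat -> R) (k : nat) : R :=
  \sum_(s < k) beta ^+ (k.-1 - s) * B s.

Lemma momsumS (R : realType) (beta : R) (B : nat -> R) (k : nat) :
  momsum beta B k.+1 = B k + beta * momsum beta B k.
Proof.
rewrite /momsum big_ord_recr /= subnn expr0 mul1r addrC; congr (_ + _).
rewrite mulr_sumr; apply: eq_bigr => s _.
have -> : (k - s = (k.-1 - s).+1)%N by have := ltn_ord s; lia.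
by rewrite exprS mulrA.
Qed.

Lemma momentum_recursion_bound (R : realType) (E B : nat -> R) (C beta : R) :
  0 <= beta -> E 0%N = 0 ->
  (forall k, `|E k.+1| <= C * B k + beta * `|E k|) ->
  forall k, `|E k| <= C * momsum beta B k.
Proof.
move=> hb E0 hE; elim=> [|k IH]; first by rewrite E0 normr0 /momsum big_ord0 mulr0.
apply: (le_trans (hE k)); rewrite momsumS mulrDr lerD2l mulrCA.
exact: ler_wpM2l.
Qed.

Lemma norm_sum_supported (R : realType) (T : finType) (A : {set T})
    (F : T -> R) (K : R) :
  (forall r, `|F r| <= K) -> (forall r, r \notin A -> F r = 0) ->
  `|\sum_r F r| <= #|A|%:R * K.
Proof.
move=> hK h0; rewrite (bigID (mem A)) /= [X in _ + X]big1 ?addr0; last first.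
  by move=> r /h0.
apply: le_trans (ler_norm_sum _ _ _) _.
by apply: le_trans (ler_sum _ (fun r _ => hK r)) _; rewrite sumr_const mulr_natl.
Qed.

Section Neuron.
Variables (R : realType) (d n m : nat).
Variables (x : 'I_n -> 'rV[R]_d) (y : 'I_n -> R) (a : 'I_m -> R).
Variables (eta beta : R) (W : nat -> 'I_m -> 'rV[R]_d) (i : 'I_n) (t : nat).
Hypothesis unit_x : forall j, normv (x j) <= 1.
Hypothesis sign_a : forall r, a r = 1 \/ a r = -1.
Hypothesis eta_gt0 : 0 < eta.
Hypothesis beta_ge0 : 0 <= beta.
Hypothesis traj : momentum_traj x y a eta beta W.

Local Notation c := (Num.sqrt (m%:R : R))^-1.

Definition residual (s : nat) (j : 'I_n) : R := uvec x a (W s) j - y j.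
Definition preact (s : nat) (r : 'I_m) : R := dotv (W s r) (x i).
Definition gradproj (s : nat) (r : 'I_m) : R := dotv (grad x y a (W s) r) (x i).
Local Notation N := (fun s => normf (residual s)).

Lemma c_ge0 : 0 <= c.
Proof. by rewrite invr_ge0 sqrtr_ge0. Qed.

Lemma c_sq : c * c = m%:R^-1.
Proof. by rewrite -invfM -expr2 sqr_sqrtr // ler0n. Qed.

Lemma norm_a r : `|a r| = 1.
Proof. by case: (sign_a r) => ->; rewrite ?normrN normr1. Qed.

Lemma preact_step s r : preact s.+1 r - preact s r =
  - eta * gradproj s r + beta * (preact s r - preact s.-1 r).
Proof. by rewrite /preact /gradproj (traj s r) dotvDl dotvBl !dotvZl dotvBl; ring. Qed.

Lemma gradproj_bound s r : `|gradproj s r| <= c * (Num.sqrt n%:R * N s).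
Proof.
rewrite /gradproj /grad dotvZl dotv_suml normrM ger0_norm ?c_ge0 //.
apply: ler_wpM2l; first exact: c_ge0.
have -> : \sum_j dotv (((net a (W s) (x j) - y j) * a r * ind (dotv (W s r) (x j)))
      *: x j) (x i)
    = \sum_j (a r * ind (dotv (W s r) (x j)) * dotv (x j) (x i)) * residual s j.
  by apply: eq_bigr => j _; rewrite dotvZl /residual /uvec; ring.
apply: weighted_sum_le => j; rewrite !normrM norm_a mul1r -[1](mulr1 1).
by rewrite ler_pM ?ind_le1 ?dotv_unit_ball.
Qed.

Lemma preact_increment_bound r k : `|preact k r - preact k.-1 r| <=
  eta * c * Num.sqrt n%:R * momsum beta N k.
Proof.
apply: (momentum_recursion_bound (E := fun k => preact k r - preact k.-1 r))
  => // [|k']; first by rewrite subrr.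
rewrite /= preact_step; apply: le_trans (ler_normD _ _) _.
rewrite !normrM normrN (gtr0_norm eta_gt0) (ger0_norm beta_ge0) lerD2r -!mulrA.
by apply: ler_wpM2l; [exact: ltW | exact: gradproj_bound].
Qed.

Definition coact (r : 'I_m) (j : 'I_n) : R :=
  if (0 <= preact t r) && (0 <= dotv (W t r) (x j)) then 1 else 0.

Definition neuron_term (r : 'I_m) : R :=
  c * (a r * ((relu (preact t.+1 r) - relu (preact t r))
             - beta * (relu (preact t r) - relu (preact t.-1 r))))
  + eta * (m%:R^-1 * \sum_j dotv (x i) (x j) * coact r j * residual t j).

Lemma phi_decomposition :
  residual t.+1 i - (1 + beta) * residual t i + beta * residual t.-1 i
    + eta * \sum_j Hmat x (W t) i j * residual t j
  = \sum_r neuron_term r.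
Proof.
have gram : \sum_j Hmat x (W t) i j * residual t j =
    \sum_r m%:R^-1 * \sum_j dotv (x i) (x j) * coact r j * residual t j.
  rewrite -mulr_sumr; under eq_bigr do rewrite /Hmat -mulrA mulr_suml.
  by rewrite -mulr_sumr exchange_big.
rewrite gram /neuron_term big_split /= -!mulr_sumr.
rewrite /residual /uvec /net -/(preact _ _).
have lin (A B C : 'I_m -> R) : \sum_r a r * ((A r - B r) - beta * (B r - C r)) =
  \sum_r a r * A r - \sum_r a r * B r - beta * (\sum_r a r * B r - \sum_r a r * C r).
  by rewrite -[\sum_r a r * B r - _]sumrB mulr_sumr -!sumrB;
     apply: eq_bigr => r _; ring.
by rewrite lin; ring.
Qed.

Lemma neuron_term_bound r : `|neuron_term r| <=
  2 * eta * Num.sqrt n%:R * m%:R^-1 * (N t + beta * momsum beta N t).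
Proof.
have minv_ge0 : 0 <= (m%:R : R)^-1 by rewrite invr_ge0 ler0n.
have step_new : `|relu (preact t.+1 r) - relu (preact t r)| <=
    eta * c * Num.sqrt n%:R * (N t + beta * momsum beta N t).
  by rewrite -momsumS; apply: le_trans (relu_lipschitz _ _) (preact_increment_bound _ _).
have step_old : `|relu (preact t r) - relu (preact t.-1 r)| <=
    eta * c * Num.sqrt n%:R * momsum beta N t.
  exact: le_trans (relu_lipschitz _ _) (preact_increment_bound _ _).
have gram : `|\sum_j dotv (x i) (x j) * coact r j * residual t j| <=
    Num.sqrt n%:R * N t.
  apply: weighted_sum_le => j; rewrite normrM -[1](mulr1 1).
  by rewrite ler_pM ?dotv_unit_ball //; rewrite /coact; case: ifP;
     rewrite ?normr1 ?normr0.
have momentum_part : `|(relu (preact t.+1 r) - relu (preact t r))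
      - beta * (relu (preact t r) - relu (preact t.-1 r))| <=
    eta * c * Num.sqrt n%:R * (N t + beta * momsum beta N t)
    + beta * (eta * c * Num.sqrt n%:R * momsum beta N t).
  apply: le_trans (ler_normB _ _) _; rewrite normrM (ger0_norm beta_ge0).
  by apply: lerD => //; exact: ler_wpM2l step_old.
rewrite /neuron_term; apply: le_trans (ler_normD _ _) _.
rewrite !normrM ger0_norm ?c_ge0 // norm_a mul1r (gtr0_norm eta_gt0) (ger0_norm minv_ge0).
apply: le_trans (lerD (ler_wpM2l c_ge0 momentum_part)
   (ler_wpM2l (ltW eta_gt0) (ler_wpM2l minv_ge0 gram))) _.
by rewrite le_eqVlt -c_sq; apply/orP; left; apply/eqP; ring.
Qed.

(* A neuron whose activation sign is frozen on steps t-1, t, t+1 contributes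
   nothing: the momentum dynamics and the Gram term cancel since a_r^2 = 1. *)
Lemma neuron_term_frozen r :
  (0 <= preact t.+1 r) = (0 <= preact t r) ->
  (0 <= preact t r) = (0 <= preact t.-1 r) ->
  neuron_term r = 0.
Proof.
move=> sign_new sign_old.
have ind_old : ind (preact t.-1 r) = ind (preact t r) by rewrite /ind sign_old.
rewrite /neuron_term (relu_same_sign sign_new) (relu_same_sign sign_old) ind_old.
set I := ind (preact t r).
set G := \sum_j dotv (x i) (x j) * ind (dotv (W t r) (x j)) * residual t j.
have momentum : (preact t.+1 r - preact t r) * I - beta * ((preact t r - preact t.-1 r) * I)
    = - eta * gradproj t r * I by rewrite preact_step; ring.
have grad_G : gradproj t r = c * (a r * G).
  rewrite /gradproj /grad dotvZl dotv_suml; congr (_ * _); rewrite /G mulr_sumr.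
  by apply: eq_bigr => j _; rewrite dotvZl (dotvC (x j) (x i)) /residual /uvec; ring.
have coact_G : \sum_j dotv (x i) (x j) * coact r j * residual t j = I * G.
  rewrite /G mulr_sumr; apply: eq_bigr => j _.
  by rewrite /coact /I /ind; do 2 case: (0 <= _); rewrite /=; ring.
have a_sq : a r * a r = 1 by case: (sign_a r) => ->; ring.
rewrite momentum grad_G coact_G -c_sq.
have -> : c * (a r * (- eta * (c * (a r * G)) * I)) + eta * (c * c * (I * G))
    = eta * (c * c) * I * G * (1 - a r * a r) by ring.
by rewrite a_sq subrr mulr0.
Qed.

End Neuron.

Lemma sign_frozen_outside_Sperp (R : realType) (d n m : nat)
    (x : 'I_n -> 'rV[R]_d) (W0 w : 'I_m -> 'rV[R]_d) (Rad : R) (i : 'I_n) (r : 'I_m) :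
  r \notin Sperp x W0 Rad i -> normv (w r - W0 r) <= Rad ->
  (0 <= dotv (w r) (x i)) = (0 <= dotv (W0 r) (x i)).
Proof.
rewrite inE => /asboolPn notA hball; apply/eqP; apply: contraT => hne.
exfalso; apply: notA; exists (w r); split => //.
by rewrite (dotvC (x i) (W0 r)) (dotvC (x i) (w r)) eq_sym.
Qed.

Theorem lemma3 (R : realType) (d n m : nat)
  (x : 'I_n -> 'rV[R]_d) (y : 'I_n -> R) (a : 'I_m -> R)
  (eta beta Rad : R) (W : nat -> 'I_m -> 'rV[R]_d) (t : nat) :
  (forall i, normv (x i) <= 1) ->
  (forall r, a r = 1 \/ a r = -1) ->
  0 < eta -> 0 <= beta -> beta <= 1 -> 0 < Rad ->
  momentum_traj x y a eta beta W ->
  (forall (r : 'I_m) (s : nat), (s <= t.+1)%N -> normv (W s r - W 0%N r) <= Rad) ->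
  let xi := fun (s : nat) (i : 'I_n) => uvec x a (W s) i - y i in
  let phi := fun i : 'I_n =>
    xi t.+1 i - (1 + beta) * xi t i + beta * xi t.-1 i
    + eta * \sum_(j < n) Hmat x (W t) i j * xi t j in
  forall i : 'I_n,
    `|phi i| <=
      2 * eta * Num.sqrt n%:R * (#|Sperp x (W 0%N) Rad i|)%:R / m%:R *
      (normf (xi t) + beta * \sum_(s < t) beta ^+ (t.-1 - s) * normf (xi s)).
Proof.
move=> unit_x sign_a eta_gt0 beta_ge0 _ _ traj ball xi phi i.
have frozen r s : r \notin Sperp x (W 0%N) Rad i -> (s <= t.+1)%N ->
    (0 <= preact x W i s r) = (0 <= preact x W i 0 r).
  by move=> hr hs; exact: sign_frozen_outside_Sperp hr (ball r s hs).
set N := fun s => normf (residual x y a W s).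
have -> : 2 * eta * Num.sqrt n%:R * (#|Sperp x (W 0%N) Rad i|)%:R / m%:R *
    (normf (xi t) + beta * \sum_(s < t) beta ^+ (t.-1 - s) * normf (xi s)) =
  #|Sperp x (W 0%N) Rad i|%:R *
    (2 * eta * Num.sqrt n%:R * m%:R^-1 * (N t + beta * momsum beta N t)).
  by rewrite /N /momsum /residual /xi; ring.
rewrite /phi /xi (phi_decomposition x y a eta beta W i t).
apply: norm_sum_supported => [r|r hr]; first exact: neuron_term_bound.
by apply: neuron_term_frozen => //; rewrite !frozen //; lia.
Qed.
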